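(* Let $M$ be a nontrivial monoid in $\mathcal{C}$ and let $V=\mathbb{R}\otimes_\mathbb{Z}\mathrm{gp}(M)$. The following are equivalent: (a) $M$ is primary; (b) the only face submonoids of $M$ are $\{0\}$ and $M$; (c) $\mathsf{cone}_V(M)\setminus\{0\}$ is an open subset of $V$.
   Context: Convention: all monoids are commutative, cancellative, and reduced, written additively; $M^\bullet=M\setminus\{0\}$. $\mathcal{C}$ is the class of monoids isomorphic to a submonoid of a free commutative monoid of finite rank (equivalently, of $(\mathbb{N}^d,+)$). $M$ is regarded as a submonoid of $V$ via $M\hookrightarrow\mathrm{gp}(M)\hookrightarrow V$, and $V$ carries its Euclidean topology; $\mathsf{cone}_V(M)$ is the set of finite nonnegative linear combinations of elements of $M$. A face of a cone $C$ is a cone $F\subseteq C$ such that whenever $x,y\in C$ and $F$ meets the open segment between $x$ and $y$, then $x,y\in F$; a face submonoid is $M\cap F$ for a face $F$ of $\mathsf{cone}_V(M)$. $M$ is primary if $M$ is nontrivial and for all $x,y\in M^\bullet$ there is $n\in\mathbb{N}$ with $ny\in x+M$. *)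

From Stdlib Require Import Reals List Arith.
Import ListNotations.
Open Scope R_scope.

(* Elements of N^d are represented as functions nat -> nat vanishing at
   coordinates >= d; real vectors as functions nat -> R. *)
Definition natvec := nat -> nat.
Definition rvec := nat -> R.

Definition zeroN : natvec := fun _ => 0%nat.
Definition zeroR : rvec := fun _ => 0.
Definition addN (x y : natvec) : natvec := fun i => (x i + y i)%nat.
Definition smulN (n : nat) (x : natvec) : natvec := fun i => (n * x i)%nat.
Definition addR (x y : rvec) : rvec := fun i => x i + y i.
Definition smulR (a : R) (x : rvec) : rvec := fun i => a * x i.

Definition embed (x : natvec) : rvec := fun i => INR (x i).

Definition submonoid_Nd (d : nat) (M : natvec -> Prop) : Prop :=
  M zeroN /\
  (forall x y, M x -> M y -> M (addN x y)) /\
  (forall x, M x -> forall i, (d <= i)%nat -> x i = 0%nat).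

Definition nontrivial (M : natvec -> Prop) : Prop :=
  exists x, M x /\ x <> zeroN.

Definition primary (M : natvec -> Prop) : Prop :=
  nontrivial M /\
  forall x y, M x -> x <> zeroN -> M y -> y <> zeroN ->
    exists (n : nat) (z : natvec), M z /\ smulN n y = addN x z.

Definition lincomb (l : list (R * natvec)) : rvec :=
  fun i => fold_right (fun p acc => fst p * INR (snd p i) + acc) 0 l.

Definition coneM (M : natvec -> Prop) (v : rvec) : Prop :=
  exists l : list (R * natvec),
    Forall (fun p => 0 <= fst p /\ M (snd p)) l /\ v = lincomb l.

(* V = R (x) gp(M), realized as the real span of M inside R^d *)
Definition spanM (M : natvec -> Prop) (v : rvec) : Prop :=
  exists l : list (R * natvec),
    Forall (fun p => M (snd p)) l /\ v = lincomb l.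

Definition dist (d : nat) (x y : rvec) : R :=
  sqrt (fold_right Rplus 0 (map (fun i => Rsqr (x i - y i)) (seq 0 d))).

Definition is_cone (C : rvec -> Prop) : Prop :=
  (exists v, C v) /\
  (forall x y, C x -> C y -> C (addR x y)) /\
  (forall a x, 0 <= a -> C x -> C (smulR a x)).

Definition is_face (C F : rvec -> Prop) : Prop :=
  is_cone F /\ (forall v, F v -> C v) /\
  forall x y, C x -> C y ->
    (exists t, 0 < t < 1 /\ F (addR (smulR (1 - t) x) (smulR t y))) ->
    F x /\ F y.

Definition face_submonoid (M N : natvec -> Prop) : Prop :=
  exists F, is_face (coneM M) F /\ forall x, N x <-> (M x /\ F (embed x)).

Definition open_in_V (d : nat) (M : natvec -> Prop) (S : rvec -> Prop) : Prop :=
  (forall v, S v -> spanM M v) /\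
  forall x, S x -> exists eps, 0 < eps /\
    forall y, spanM M y -> dist d x y < eps -> S y.

From Pilot Require Import Defs.
From Stdlib Require Import Reals List Arith.
From Stdlib Require Import Lra Lia ZArith Classical FunctionalExtensionality.
Import ListNotations.
Open Scope R_scope.
Local Notation dist := Defs.dist.

(* Let M be a submonoid of N^d, C = cone_V(M) and V the real span of M.  We
   prove the cycle of implications
     (a) primary  =>  (c) C \ {0} open in V  =>  (b) only trivial face
     submonoids  =>  (a).
   (c) => (b): a face meeting embed x (x <> 0) contains every m in M, since
     x - delta m stays in C for small delta and faces are closed under
     decomposition of their points into sums of cone elements.
   (b) => (a): the face generated by y contains x, i.e. lambda y - x is a
     nonnegative real combination of elements of M; a rational solution of
     the corresponding linear system (obtained by Gaussian elimination) and a
     common denominator turn this into n y = x + z with z in M.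
   (a) => (c): finite-dimensional norm equivalence (a finite family of M with
     bounded coordinates on V, again by elimination) reduces openness at x to
     absorbing a small combination of that family by a multiple of a generator
     y of x, which primarity provides. *)

Fixpoint rsum (n : nat) (f : nat -> R) : R :=
  match n with O => 0 | S n' => rsum n' f + f n' end.

Lemma rsum_ext n f g : (forall j, (j < n)%nat -> f j = g j) -> rsum n f = rsum n g.
Proof.
  induction n as [|n IH]; simpl; intros H; auto.
  rewrite IH by (intros; apply H; lia). rewrite H by lia. reflexivity.
Qed.

Lemma rsum_shift n f : rsum (S n) f = f O + rsum n (fun j => f (S j)).
Proof. induction n as [|n IH]; simpl in *; [lra | rewrite IH; lra]. Qed.

Lemma rsum_add n f g : rsum n (fun j => f j + g j) = rsum n f + rsum n g.
Proof. induction n; simpl; lra. Qed.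

Lemma rsum_scale n c f : rsum n (fun j => c * f j) = c * rsum n f.
Proof. induction n as [|n IH]; simpl; [ring | rewrite IH; ring]. Qed.

Lemma rsum_const n c : rsum n (fun _ => c) = INR n * c.
Proof. induction n as [|n IH]; [simpl; ring | rewrite S_INR; simpl; rewrite IH; ring]. Qed.

Lemma rsum_le n f g : (forall j, (j < n)%nat -> f j <= g j) -> rsum n f <= rsum n g.
Proof.
  induction n as [|n IH]; simpl; intros H; [lra|].
  assert (f n <= g n) by (apply H; lia).
  assert (rsum n f <= rsum n g) by (apply IH; intros; apply H; lia). lra.
Qed.

Lemma rsum_nonneg n f : (forall j, (j < n)%nat -> 0 <= f j) -> 0 <= rsum n f.
Proof.
  intros H. rewrite <- (Rmult_0_r (INR n)), <- rsum_const. apply rsum_le; auto.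
Qed.

Lemma rsum_abs n f : Rabs (rsum n f) <= rsum n (fun j => Rabs (f j)).
Proof.
  induction n; simpl; [rewrite Rabs_R0; lra|].
  eapply Rle_trans; [apply Rabs_triang | lra].
Qed.

Lemma rsum_term n f j :
  (j < n)%nat -> (forall i, (i < n)%nat -> 0 <= f i) -> f j <= rsum n f.
Proof.
  induction n as [|n IH]; simpl; intros Hj H; [lia|].
  assert (0 <= f n) by (apply H; lia).
  destruct (Nat.eq_dec j n) as [->|Hne].
  - assert (0 <= rsum n f) by (apply rsum_nonneg; intros; apply H; lia). lra.
  - assert (f j <= rsum n f) by (apply IH; [lia | intros; apply H; lia]). lra.
Qed.

Lemma lincomb_cons p l i : lincomb (p :: l) i = fst p * INR (snd p i) + lincomb l i.
Proof. reflexivity. Qed.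

Lemma lincomb_app l1 l2 : lincomb (l1 ++ l2) = addR (lincomb l1) (lincomb l2).
Proof.
  apply functional_extensionality; intro i. unfold addR.
  induction l1 as [|p l1 IH]; simpl app; [cbn; ring | rewrite !lincomb_cons, IH; ring].
Qed.

Lemma lincomb_scale a l :
  lincomb (map (fun p => (a * fst p, snd p)) l) = smulR a (lincomb l).
Proof.
  apply functional_extensionality; intro i. unfold smulR.
  induction l as [|p l IH]; simpl map; [cbn; ring | rewrite !lincomb_cons, IH; simpl; ring].
Qed.

Lemma coneM_zero M : coneM M zeroR.
Proof. exists []. split; auto. Qed.

Lemma coneM_add M x y : coneM M x -> coneM M y -> coneM M (addR x y).
Proof.
  intros [l1 [H1 ->]] [l2 [H2 ->]]. exists (l1 ++ l2).
  split; [apply Forall_app; auto | symmetry; apply lincomb_app].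
Qed.

Lemma coneM_scale M a x : 0 <= a -> coneM M x -> coneM M (smulR a x).
Proof.
  intros Ha [l [H ->]]. exists (map (fun p => (a * fst p, snd p)) l).
  split; [|symmetry; apply lincomb_scale].
  rewrite Forall_map. eapply Forall_impl; [|exact H].
  intros p [? ?]; split; auto. apply Rmult_le_pos; auto.
Qed.

Lemma coneM_embed (M : natvec -> Prop) m : M m -> coneM M (embed m).
Proof.
  intros H. exists [(1, m)]. split; [constructor; simpl; auto; split; auto; lra|].
  apply functional_extensionality; intro i. cbn. unfold embed. ring.
Qed.

Lemma coneM_ext M x y : (forall i, x i = y i) -> coneM M x -> coneM M y.
Proof. intros H. replace y with x; auto. apply functional_extensionality; auto. Qed.

Lemma spanM_add M x y : spanM M x -> spanM M y -> spanM M (addR x y).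
Proof.
  intros [l1 [H1 ->]] [l2 [H2 ->]]. exists (l1 ++ l2).
  split; [apply Forall_app; auto | symmetry; apply lincomb_app].
Qed.

Lemma spanM_scale M a x : spanM M x -> spanM M (smulR a x).
Proof.
  intros [l [H ->]]. exists (map (fun p => (a * fst p, snd p)) l).
  split; [rewrite Forall_map; exact H | symmetry; apply lincomb_scale].
Qed.

Lemma coneM_spanM M x : coneM M x -> spanM M x.
Proof.
  intros [l [H ->]]. exists l. split; auto.
  eapply Forall_impl; [|exact H]. simpl; tauto.
Qed.

Definition pos_gens (M : natvec -> Prop) (l : list (R * natvec)) : Prop :=
  Forall (fun p => 0 < fst p /\ M (snd p) /\ snd p <> zeroN) l.

Lemma coneM_pos_repr M v : coneM M v -> exists l, pos_gens M l /\ v = lincomb l.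
Proof.
  intros [l [Hl ->]]. induction Hl as [|p l [Hp Mp] Hl [l' [Hl' Heq]]].
  - exists []. split; [constructor | reflexivity].
  - destruct (classic (0 < fst p /\ snd p <> zeroN)) as [[Hpos Hnz] | Hdeg].
    + exists (p :: l'). split; [constructor; auto|].
      apply functional_extensionality; intro i. rewrite !lincomb_cons, Heq. reflexivity.
    + exists l'. split; auto.
      apply functional_extensionality; intro i. rewrite lincomb_cons, Heq.
      destruct (Req_dec (fst p) 0) as [E|E]; [rewrite E; ring|].
      replace (snd p) with zeroN by (apply NNPP; intro; apply Hdeg; split; auto; lra).
      cbn. ring.
Qed.

Lemma lincomb_nonneg (M : natvec -> Prop) l i :
  Forall (fun p => 0 <= fst p /\ M (snd p)) l -> 0 <= lincomb l i.
Proof.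
  induction 1 as [|p l [Hp _] _ IH]; [cbn; lra|].
  rewrite lincomb_cons. pose proof (pos_INR (snd p i)).
  assert (0 <= fst p * INR (snd p i)) by (apply Rmult_le_pos; auto). lra.
Qed.

Lemma fold_map_seq (g : nat -> R) a n :
  fold_right Rplus 0 (map g (seq a n)) = rsum n (fun j => g (a + j)%nat).
Proof.
  revert a; induction n as [|n IH]; intros a; [reflexivity|].
  rewrite rsum_shift. simpl. rewrite IH, Nat.add_0_r. f_equal.
  apply rsum_ext. intros j _. f_equal. lia.
Qed.

Lemma dist_rsum d x y : dist d x y = sqrt (rsum d (fun i => Rsqr (x i - y i))).
Proof. unfold dist. rewrite fold_map_seq. reflexivity. Qed.

Lemma dist_coord d x y i : (i < d)%nat -> Rabs (x i - y i) <= dist d x y.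
Proof.
  intros Hi. rewrite dist_rsum, <- sqrt_Rsqr_abs. apply sqrt_le_1_alt.
  apply (rsum_term d (fun i => Rsqr (x i - y i))); auto. intros; apply Rle_0_sqr.
Qed.

Lemma dist_scaled d x y a w : (forall i, x i - y i = a * w i) ->
  dist d x y = Rabs a * sqrt (rsum d (fun i => Rsqr (w i))).
Proof.
  intros H. rewrite dist_rsum.
  rewrite (rsum_ext d _ (fun i => Rsqr a * Rsqr (w i))) by (intros; rewrite H; unfold Rsqr; ring).
  rewrite rsum_scale, sqrt_mult_alt, sqrt_Rsqr_abs by apply Rle_0_sqr. reflexivity.
Qed.

Lemma face_zero C F : is_face C F -> F zeroR.
Proof.
  intros [[[v Hv] [_ Hscale]] _].
  replace zeroR with (smulR 0 v) by (apply functional_extensionality; intro; unfold smulR, zeroR; ring).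
  apply Hscale; auto; lra.
Qed.

Lemma face_summands C F u w : is_cone C -> is_face C F -> C u -> C w ->
  F (addR u w) -> F u /\ F w.
Proof.
  intros [_ [_ HCscale]] HF Cu Cw Fuw. destruct HF as [[_ [_ HFscale]] [_ Hface]].
  assert (Hhalf : forall v, F (smulR 2 v) -> F v).
  { intros v Hv. replace v with (smulR (/ 2) (smulR 2 v)).
    - apply HFscale; auto; lra.
    - apply functional_extensionality; intro; unfold smulR; field. }
  destruct (Hface (smulR 2 u) (smulR 2 w)) as [F2u F2w];
    try (apply HCscale; auto; lra).
  - exists (1 / 2). split; [lra|].
    replace (addR _ _) with (addR u w); auto.
    apply functional_extensionality; intro; unfold addR, smulR; field.
  - split; apply Hhalf; auto.
Qed.

Lemma coneM_is_cone M : is_cone (coneM M).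
Proof.
  split; [exists zeroR; apply coneM_zero | split; intros; [apply coneM_add | apply coneM_scale]; auto].
Qed.

Lemma embed_nonzero x : x <> zeroN -> embed x <> zeroR.
Proof.
  intros Hx E. apply Hx. apply functional_extensionality; intro i.
  apply INR_eq. change (embed x i = zeroR i). rewrite E. reflexivity.
Qed.

(* (c) => (b): if cone_V(M) \ {0} is open in V, a face containing some nonzero
   embed x also contains every m in M, because x - delta m stays in the cone
   for small delta > 0 and x = (x - delta m) + delta m. *)

Lemma open_cone_step d M x m :
  open_in_V d M (fun v => coneM M v /\ v <> zeroR) ->
  coneM M x -> x <> zeroR -> M m ->
  exists delta, 0 < delta /\ coneM M (addR x (smulR (- delta) (embed m))).
Proof.
  intros [_ Hopen] Cx Hx0 Mm.
  destruct (Hopen x (conj Cx Hx0)) as [eps [Heps Hball]].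
  set (s := sqrt (rsum d (fun i => Rsqr (embed m i)))).
  assert (Hs : 0 <= s) by apply sqrt_pos.
  set (delta := eps / (2 * (s + 1))).
  assert (Hdelta : 0 < delta) by (apply Rdiv_lt_0_compat; lra).
  exists delta. split; auto. apply Hball.
  - apply spanM_add; [apply coneM_spanM; auto|].
    apply spanM_scale, coneM_spanM, coneM_embed; auto.
  - rewrite (dist_scaled d _ _ delta (embed m)) by (intro; unfold addR, smulR; ring).
    rewrite Rabs_right by lra. fold s.
    apply Rle_lt_trans with (delta * (s + 1)); [apply Rmult_le_compat_l; lra|].
    unfold delta. replace (eps / (2 * (s + 1)) * (s + 1)) with (eps / 2) by (field; lra). lra.
Qed.

Lemma open_to_trivial_faces d M : submonoid_Nd d M ->
  open_in_V d M (fun v => coneM M v /\ v <> zeroR) ->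
  forall N, face_submonoid M N ->
    (forall x, N x <-> x = zeroN) \/ (forall x, N x <-> M x).
Proof.
  intros [HM0 _] Hopen N [F [HF HN]].
  destruct (classic (exists x, N x /\ x <> zeroN)) as [[x [Nx Hx0]] | Hnone].
  - right. intros m. split; [intros Hm; apply HN in Hm; tauto|].
    intros Mm. apply HN. split; auto.
    apply HN in Nx as [Mx Fx].
    destruct (open_cone_step d M (embed x) m Hopen (coneM_embed M x Mx) (embed_nonzero x Hx0) Mm)
      as [delta [Hdelta Cw]].
    set (w := addR (embed x) (smulR (- delta) (embed m))) in Cw.
    assert (Cm : coneM M (smulR delta (embed m))) by (apply coneM_scale; [lra | apply coneM_embed; auto]).
    destruct (face_summands _ F w _ (coneM_is_cone M) HF Cw Cm) as [_ Fm].
    { replace (addR w _) with (embed x); auto.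
      apply functional_extensionality; intro; unfold w, addR, smulR; ring. }
    replace (embed m) with (smulR (/ delta) (smulR delta (embed m))).
    + destruct HF as [[_ [_ HFscale]] _]. apply HFscale; auto.
      left; apply Rinv_0_lt_compat; lra.
    + apply functional_extensionality; intro; unfold smulR; field; lra.
  - left. intros z. split.
    + intros Nz. apply NNPP. intros Hz. apply Hnone. eauto.
    + intros ->. apply HN. split; auto. apply (face_zero _ _ HF).
Qed.

Definition rational (r : R) : Prop := exists p q : Z, IZR q <> 0 /\ r = IZR p / IZR q.

Lemma rational_IZR z : rational (IZR z).
Proof. exists z, 1%Z. split; simpl; [lra | field]. Qed.

Lemma rational_INR n : rational (INR n).
Proof. rewrite INR_IZR_INZ. apply rational_IZR. Qed.

Lemma rational_add a b : rational a -> rational b -> rational (a + b).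
Proof.
  intros [p1 [q1 [H1 ->]]] [p2 [q2 [H2 ->]]]. exists (p1 * q2 + p2 * q1)%Z, (q1 * q2)%Z.
  rewrite plus_IZR, !mult_IZR. split; [apply Rmult_integral_contrapositive; auto | field; auto].
Qed.

Lemma rational_mul a b : rational a -> rational b -> rational (a * b).
Proof.
  intros [p1 [q1 [H1 ->]]] [p2 [q2 [H2 ->]]]. exists (p1 * p2)%Z, (q1 * q2)%Z.
  rewrite !mult_IZR. split; [apply Rmult_integral_contrapositive; auto | field; auto].
Qed.

Lemma rational_opp a : rational a -> rational (- a).
Proof. intros [p [q [H ->]]]. exists (- p)%Z, q. rewrite opp_IZR. split; auto. field; auto. Qed.

Lemma rational_inv a : rational a -> a <> 0 -> rational (/ a).
Proof.
  intros [p [q [H ->]]] Ha. exists q, p.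
  assert (IZR p <> 0) by (intros E; apply Ha; rewrite E; unfold Rdiv; ring).
  split; auto. field; auto.
Qed.

Lemma rational_div a b : rational a -> rational b -> b <> 0 -> rational (a / b).
Proof. intros. apply rational_mul; auto. apply rational_inv; auto. Qed.

Lemma rational_rsum n f : (forall j, (j < n)%nat -> rational (f j)) -> rational (rsum n f).
Proof.
  induction n as [|n IH]; simpl; intros H; [apply (rational_IZR 0)|].
  apply rational_add; [apply IH; intros; apply H; lia | apply H; lia].
Qed.

(* Vectors of R^k are functions nat -> R read on the coordinates j < k. *)
Definition dot (k : nat) (e u : nat -> R) : R := rsum k (fun j => e j * u j).
Definition ratvec (k : nat) (e : nat -> R) : Prop := forall j, (j < k)%nat -> rational (e j).

Lemma dot_ext k e u v : (forall j, (j < k)%nat -> u j = v j) -> dot k e u = dot k e v.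
Proof. intros H. apply rsum_ext. intros j Hj. rewrite H; auto. Qed.

Lemma dot_scale_r k e c u : dot k e (fun j => c * u j) = c * dot k e u.
Proof. unfold dot. rewrite <- rsum_scale. apply rsum_ext; intros; ring. Qed.

Lemma dot_sub_l k f c e u : dot k (fun j => f j - c * e j) u = dot k f u - c * dot k e u.
Proof.
  unfold dot. rewrite <- rsum_scale.
  rewrite (rsum_ext k _ (fun j => f j * u j + (-1) * (c * (e j * u j)))) by (intros; ring).
  rewrite rsum_add, rsum_scale. ring.
Qed.

Lemma dot_rational k e u : ratvec k e -> ratvec k u -> rational (dot k e u).
Proof. intros He Hu. apply rational_rsum. intros. apply rational_mul; auto. Qed.

Definition unitv (p : nat) : nat -> R := fun j => if Nat.eqb j p then 1 else 0.

Lemma dot_unitv k p u : (p < k)%nat -> dot k (unitv p) u = u p.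
Proof.
  induction k as [|k IH]; intros Hp; [lia|]. unfold dot in *. simpl. unfold unitv at 2.
  destruct (Nat.eq_dec p k) as [->|Hne].
  - rewrite Nat.eqb_refl, (rsum_ext k _ (fun _ => 0)), rsum_const; [ring|].
    intros j Hj. unfold unitv. replace (Nat.eqb j k) with false by (symmetry; apply Nat.eqb_neq; lia). ring.
  - rewrite IH by lia. replace (Nat.eqb k p) with false by (symmetry; apply Nat.eqb_neq; lia). ring.
Qed.

Definition upd (u : nat -> R) (p : nat) (delta : R) : nat -> R :=
  fun j => if Nat.eqb j p then u j + delta else u j.

Lemma dot_upd k f u p delta : (p < k)%nat -> dot k f (upd u p delta) = dot k f u + f p * delta.
Proof.
  unfold dot, upd. induction k as [|k IH]; intros Hp; [lia|]. simpl.
  destruct (Nat.eq_dec k p) as [->|Hne].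
  - rewrite Nat.eqb_refl, (rsum_ext p _ (fun j => f j * u j)); [ring|].
    intros j Hj. replace (Nat.eqb j p) with false by (symmetry; apply Nat.eqb_neq; lia). reflexivity.
  - rewrite IH by lia. replace (Nat.eqb k p) with false by (symmetry; apply Nat.eqb_neq; lia). ring.
Qed.

Lemma strict_ineqs_stable k u I : Forall (fun g => dot k g u > 0) I ->
  exists delta, 0 < delta /\ forall u', (forall j, (j < k)%nat -> Rabs (u' j - u j) <= delta) ->
     Forall (fun g => dot k g u' > 0) I.
Proof.
  induction 1 as [|g I Hg _ [d1 [Hd1 H1]]]; [exists 1; split; auto; lra|].
  set (S := rsum k (fun j => Rabs (g j))).
  assert (HS : 0 <= S) by (apply rsum_nonneg; intros; apply Rabs_pos).
  set (d2 := dot k g u / (2 * (S + 1))).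
  assert (Hd2 : 0 < d2) by (apply Rdiv_lt_0_compat; lra).
  exists (Rmin d1 d2). split; [apply Rmin_glb_lt; auto|].
  intros u' Hu'. constructor; [|apply H1; intros; eapply Rle_trans; [apply Hu'; auto | apply Rmin_l]].
  assert (Hdiff : Rabs (dot k g u' - dot k g u) <= d2 * S).
  { unfold dot, S. rewrite <- rsum_scale.
    replace (rsum k (fun j => g j * u' j) - rsum k (fun j => g j * u j))
      with (rsum k (fun j => g j * (u' j - u j)))
      by (rewrite (rsum_ext k _ (fun j => g j * u' j + (-1) * (g j * u j))) by (intros; ring);
          rewrite rsum_add, rsum_scale; ring).
    eapply Rle_trans; [apply rsum_abs | apply rsum_le]. intros j Hj.
    rewrite Rabs_mult, Rmult_comm. apply Rmult_le_compat_r; [apply Rabs_pos|].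
    eapply Rle_trans; [apply Hu'; auto | apply Rmin_r]. }
  assert (d2 * S < dot k g u).
  { apply Rle_lt_trans with (d2 * (S + 1)); [apply Rmult_le_compat_l; lra|].
    unfold d2. replace (dot k g u / (2 * (S + 1)) * (S + 1)) with (dot k g u / 2) by (field; lra). lra. }
  unfold Rabs in Hdiff. destruct (Rcase_abs _); lra.
Qed.

Lemma rational_approx k u delta : 0 < delta ->
  exists u', ratvec k u' /\ forall j, (j < k)%nat -> Rabs (u' j - u j) <= delta.
Proof.
  intros Hd. destruct (archimed_cor1 delta Hd) as [N [HN HN0]].
  assert (HNr : 0 < INR N) by (apply lt_0_INR; auto).
  exists (fun j => IZR (up (u j * INR N)) / INR N). split.
  - intros j _. apply rational_div; [apply rational_IZR | apply rational_INR | lra].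
  - intros j _. destruct (archimed (u j * INR N)) as [Hup1 Hup2].
    replace (IZR (up (u j * INR N)) / INR N - u j)
      with ((IZR (up (u j * INR N)) - u j * INR N) / INR N) by (field; lra).
    rewrite Rabs_right.
    + apply Rle_trans with (1 / INR N); [|unfold Rdiv; lra].
      unfold Rdiv. apply Rmult_le_compat_r; [left; apply Rinv_0_lt_compat|]; lra.
    + apply Rle_ge. unfold Rdiv. apply Rmult_le_pos; [lra | left; apply Rinv_0_lt_compat; lra].
Qed.

Definition pivot_reduce (e : nat -> R) (p : nat) (f : nat -> R) : nat -> R :=
  fun j => f j - (f p / e p) * e j.

Lemma pivot_reduce_dot k e p f v : dot k e v = 0 -> dot k (pivot_reduce e p f) v = dot k f v.
Proof. intros Hv. unfold pivot_reduce. rewrite dot_sub_l, Hv. ring. Qed.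

Lemma pivot_reduce_rational k e p f : (p < k)%nat -> e p <> 0 ->
  ratvec k e -> ratvec k f -> ratvec k (pivot_reduce e p f).
Proof.
  intros Hp Hep He Hf j Hj. unfold pivot_reduce.
  apply rational_add; [auto|]. apply rational_opp, rational_mul; auto. apply rational_div; auto.
Qed.

Lemma pivot_correction k e p u : (p < k)%nat -> e p <> 0 -> ratvec k e -> ratvec k u ->
  exists u', ratvec k u' /\ dot k e u' = 0 /\
    forall f, dot k f u' = dot k (pivot_reduce e p f) u.
Proof.
  intros Hp Hep He Hu. exists (upd u p (- dot k e u / e p)). split; [|split].
  - intros j Hj. unfold upd. destruct (Nat.eqb j p); auto.
    apply rational_add; auto. apply rational_div; auto. apply rational_opp, dot_rational; auto.
  - rewrite dot_upd by auto. field. auto.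
  - intros f. rewrite dot_upd by auto. unfold pivot_reduce. rewrite dot_sub_l. field. auto.
Qed.

Lemma rational_solution_len k n : forall (E I : list (nat -> R)) (u : nat -> R),
  length E = n -> Forall (ratvec k) E -> Forall (ratvec k) I ->
  Forall (fun e => dot k e u = 0) E -> Forall (fun g => dot k g u > 0) I ->
  exists u', ratvec k u' /\ Forall (fun e => dot k e u' = 0) E /\ Forall (fun g => dot k g u' > 0) I.
Proof.
  induction n as [|n IH]; intros [|e E] I u Hlen HE HI He Hg; simpl in Hlen; try lia.
  - destruct (strict_ineqs_stable k u I Hg) as [delta [Hd Hstable]].
    destruct (rational_approx k u delta Hd) as [u' [Hq Hu']].
    exists u'. auto.
  - inversion HE as [|? ? Hre HE']; subst. inversion He as [|? ? Heu He']; subst.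
    destruct (classic (exists p, (p < k)%nat /\ e p <> 0)) as [[p [Hp Hep]] | Hnopivot].
    +
      set (red := pivot_reduce e p).
      destruct (IH (map red E) (map red I) u) as [v [Hv [HEv HIv]]].
      * rewrite length_map. lia.
      * rewrite Forall_map. eapply Forall_impl; [|exact HE']. intros; apply pivot_reduce_rational; auto.
      * rewrite Forall_map. eapply Forall_impl; [|exact HI]. intros; apply pivot_reduce_rational; auto.
      * rewrite Forall_map. eapply Forall_impl; [|exact He']. intros f Hf. unfold red. rewrite pivot_reduce_dot; auto.
      * rewrite Forall_map. eapply Forall_impl; [|exact Hg]. intros f Hf. unfold red. rewrite pivot_reduce_dot; auto.
      * destruct (pivot_correction k e p v Hp Hep Hre Hv) as [u' [Hu' [Heu' Hval]]].
        rewrite Forall_map in HEv, HIv.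
        exists u'. split; [auto | split; [constructor; auto|]].
        -- eapply Forall_impl; [|exact HEv]. intros f Hf. rewrite Hval. exact Hf.
        -- eapply Forall_impl; [|exact HIv]. intros f Hf. rewrite Hval. exact Hf.
    +
      destruct (IH E I u) as [u' [Hq [H1 H2]]]; auto.
      exists u'. split; [auto | split; [constructor; auto | auto]].
      unfold dot. rewrite (rsum_ext k _ (fun _ => 0)), rsum_const; [ring|].
      intros j Hj. replace (e j) with 0; [ring|].
      apply NNPP. intros Hne. apply Hnopivot. eauto.
Qed.

Lemma rational_solution k (E I : list (nat -> R)) (u : nat -> R) :
  Forall (ratvec k) E -> Forall (ratvec k) I ->
  Forall (fun e => dot k e u = 0) E -> Forall (fun g => dot k g u > 0) I ->
  exists u', ratvec k u' /\ Forall (fun e => dot k e u' = 0) E /\ Forall (fun g => dot k g u' > 0) I.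
Proof. apply (rational_solution_len k (length E)); auto. Qed.

Lemma common_denominator k u : ratvec k u ->
  exists D : Z, (0 < D)%Z /\ forall j, (j < k)%nat -> exists z, IZR D * u j = IZR z.
Proof.
  induction k as [|k IH]; intros H; [exists 1%Z; split; [lia | intros; lia]|].
  destruct IH as [D [HD Hz]]; [intros j Hj; apply H; lia|].
  destruct (H k ltac:(lia)) as [p [q [Hq Hu]]].
  assert (q <> 0%Z) by (intros ->; apply Hq; auto).
  exists (D * q * q)%Z. split; [assert (0 < q * q)%Z by nia; nia|].
  intros j Hj. destruct (Nat.eq_dec j k) as [->|Hne].
  - exists (D * q * p)%Z. rewrite Hu, !mult_IZR. field. auto.
  - destruct (Hz j ltac:(lia)) as [z Hzz]. exists (z * q * q)%Z.
    rewrite !mult_IZR, <- Hzz. ring.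
Qed.

Lemma integral_real_to_nat r z : r = IZR z -> 0 < r -> INR (Z.to_nat (up r - 1)) = r.
Proof.
  intros -> Hp. rewrite <- (tech_up (IZR z) (z + 1)) by (rewrite plus_IZR; lra).
  replace (z + 1 - 1)%Z with z by lia.
  rewrite INR_IZR_INZ, Z2Nat.id; auto. apply le_IZR. lra.
Qed.

Lemma positive_integer_solution k (E : list (nat -> R)) u :
  Forall (ratvec k) E -> (forall j, (j < k)%nat -> 0 < u j) ->
  Forall (fun e => dot k e u = 0) E ->
  exists n : nat -> nat, (forall j, (j < k)%nat -> (0 < n j)%nat) /\
    Forall (fun e => dot k e (fun j => INR (n j)) = 0) E.
Proof.
  intros HE Hpos Hsol.
  destruct (rational_solution k E (map unitv (seq 0 k)) u HE) as [u' [Hq [Hsol' Hpos']]]; auto.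
  { rewrite Forall_map, Forall_forall. intros p _ j _. unfold unitv.
    destruct (Nat.eqb j p); [apply (rational_IZR 1) | apply (rational_IZR 0)]. }
  { rewrite Forall_map, Forall_forall. intros j Hj. apply in_seq in Hj.
    rewrite dot_unitv by lia. apply Rlt_gt, Hpos. lia. }
  assert (Hpos'' : forall j, (j < k)%nat -> 0 < u' j).
  { intros j Hj. rewrite Forall_map, Forall_forall in Hpos'.
    rewrite <- (dot_unitv k j u') by auto. apply Hpos'. apply in_seq. lia. }
  destruct (common_denominator k u' Hq) as [D [HD Hint]].
  assert (HDr : 0 < IZR D) by (apply IZR_lt; auto).
  set (n := fun j => Z.to_nat (up (IZR D * u' j) - 1)).
  assert (Hn : forall j, (j < k)%nat -> INR (n j) = IZR D * u' j).
  { intros j Hj. destruct (Hint j Hj) as [z Hz]. apply (integral_real_to_nat _ z); auto.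
    apply Rmult_lt_0_compat; auto. }
  exists n. split.
  - intros j Hj. apply INR_lt. simpl. rewrite Hn by auto. apply Rmult_lt_0_compat; auto.
  - eapply Forall_impl; [|exact Hsol']. intros e He.
    rewrite (dot_ext k e _ (fun j => IZR D * u' j)), dot_scale_r, He by auto. ring.
Qed.

(* For x, y in M \ {0}, the smallest face of cone_V(M) containing
   y is F_y = {v in the cone | lambda y - v in the cone for some lambda}.  Its
   face submonoid contains y, hence is all of M by (b), so lambda y - x lies in
   the cone.  Clearing denominators in a rational solution of the resulting
   linear system gives n y = x + z with z in M. *)

Lemma smulN_M d M n x : submonoid_Nd d M -> M x -> M (smulN n x).
Proof.
  intros [H0 [Hadd _]] Hx. induction n as [|n IH]; [exact H0|].
  replace (smulN (S n) x) with (addN x (smulN n x)); [apply Hadd; auto|].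
  apply functional_extensionality; intro; reflexivity.
Qed.

Fixpoint nat_comb (gs : list natvec) (n : nat -> nat) : natvec :=
  match gs with
  | [] => zeroN
  | g :: gs' => addN (smulN (n O) g) (nat_comb gs' (fun j => n (S j)))
  end.

Lemma nat_comb_M d M gs n : submonoid_Nd d M -> Forall M gs -> M (nat_comb gs n).
Proof.
  intros Hs Hgs. revert n. induction Hgs; intros n; simpl; [apply Hs|].
  apply Hs; [apply smulN_M with d|]; auto.
Qed.

Lemma nat_comb_INR gs n i :
  INR (nat_comb gs n i) = rsum (length gs) (fun j => INR (n j) * INR (nth j gs zeroN i)).
Proof.
  revert n; induction gs as [|g gs IH]; intros n; [reflexivity|].
  simpl nat_comb. unfold addN at 1, smulN at 1.
  rewrite plus_INR, mult_INR, IH. simpl length. rewrite rsum_shift. reflexivity.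
Qed.

Lemma lincomb_rsum l i :
  lincomb l i = rsum (length l) (fun j => fst (nth j l (0, zeroN)) * INR (snd (nth j l (0, zeroN)) i)).
Proof.
  induction l as [|p l IH]; [reflexivity|].
  rewrite lincomb_cons, IH. simpl length. rewrite rsum_shift. reflexivity.
Qed.

Lemma relation_coefficient_pos (M : natvec -> Prop) x y lam l : x <> zeroN -> pos_gens M l ->
  (forall i, lam * INR (y i) - INR (x i) = lincomb l i) -> 0 < lam.
Proof.
  intros Hx0 Hl Heq.
  destruct (classic (exists i, x i <> 0%nat)) as [[i Hi] | Hno].
  - assert (0 < INR (x i)) by (apply lt_0_INR; lia).
    assert (0 <= lincomb l i).
    { apply (lincomb_nonneg M). eapply Forall_impl; [|exact Hl]. simpl. intros p [? [? _]]; split; auto; lra. }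
    pose proof (Heq i). pose proof (pos_INR (y i)).
    destruct (Rle_or_lt lam 0); auto. nra.
  - exfalso. apply Hx0. apply functional_extensionality. intros i.
    apply NNPP. intros H. apply Hno. eauto.
Qed.

(* A real relation lambda y = x + sum_j c_j g_j with lambda, c_j > 0 yields an
   integral one n0 y = n1 x + sum_j n_j g_j with n1 >= 1: the coefficient
   vector (lambda, 1, c) is a positive solution of a rational linear system. *)
Lemma integral_relation d (M : natvec -> Prop) x y lam l : pos_gens M l -> 0 < lam ->
  (forall i, lam * INR (y i) - INR (x i) = lincomb l i) ->
  exists (n0 n1 : nat) (n : nat -> nat), (1 <= n1)%nat /\ forall i, (i < d)%nat ->
    INR n0 * INR (y i) = INR n1 * INR (x i)
      + rsum (length l) (fun j => INR (n j) * INR (nth j (map snd l) zeroN i)).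
Proof.
  intros Hl Hlam Heq.
  set (L := length l). set (g := map snd l).
  assert (Hg : forall j, snd (nth j l (0, zeroN)) = nth j g zeroN)
    by (intros j; unfold g; rewrite <- (map_nth snd l (0, zeroN)); reflexivity).
  (* unknowns: v 0 for y, v 1 for x, v (j+2) for the j-th generator *)
  set (k := S (S L)).
  set (row := fun i j => match j with
                         | O => INR (y i) | 1%nat => - INR (x i)
                         | S (S j') => - INR (nth j' g zeroN i) end).
  assert (Hrow : forall i v, dot k (row i) v =
    INR (y i) * v O - INR (x i) * v 1%nat - rsum L (fun j => INR (nth j g zeroN i) * v (S (S j)))).
  { intros i v. unfold dot, k. rewrite !rsum_shift.
    rewrite (rsum_ext L _ (fun j => -1 * (INR (nth j g zeroN i) * v (S (S j))))) by (intros; unfold row; ring).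
    rewrite rsum_scale. unfold row. ring. }
  set (u := fun j => match j with O => lam | 1%nat => 1 | S (S j') => fst (nth j' l (0, zeroN)) end).
  destruct (positive_integer_solution k (map row (seq 0 d)) u) as [n [Hnpos Hnsol]].
  - rewrite Forall_map, Forall_forall. intros i _ j _. unfold row.
    destruct j as [|[|j]]; [|apply rational_opp|apply rational_opp]; apply rational_INR.
  - intros j Hj. unfold u. destruct j as [|[|j]]; [auto | lra|].
    unfold pos_gens in Hl. rewrite Forall_forall in Hl. apply Hl, nth_In. unfold k, L in Hj. lia.
  - rewrite Forall_map, Forall_forall. intros i _. rewrite Hrow.
    pose proof (Heq i) as Hi. rewrite lincomb_rsum in Hi. fold L in Hi.
    rewrite (rsum_ext L _ (fun j => fst (nth j l (0, zeroN)) * INR (snd (nth j l (0, zeroN)) i))).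
    + unfold u. lra.
    + intros j _. rewrite Hg. unfold u. ring.
  - exists (n O), (n 1%nat), (fun j => n (S (S j))). split; [apply Hnpos; unfold k; lia|].
    intros i Hi. rewrite Forall_map, Forall_forall in Hnsol.
    pose proof (Hnsol i ltac:(apply in_seq; lia)) as Hrowi. rewrite Hrow in Hrowi.
    fold L g. rewrite (rsum_ext L _ (fun j => INR (nth j g zeroN i) * INR (n (S (S j))))) by (intros; ring).
    lra.
Qed.

Lemma cone_relation_integral d M x y lam l : submonoid_Nd d M -> M x -> M y -> x <> zeroN ->
  pos_gens M l -> (forall i, lam * INR (y i) - INR (x i) = lincomb l i) ->
  exists n z, M z /\ smulN n y = addN x z.
Proof.
  intros Hs Mx My Hx0 Hl Heq.
  pose proof (relation_coefficient_pos M x y lam l Hx0 Hl Heq) as Hlam.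
  destruct (integral_relation d M x y lam l Hl Hlam Heq) as [n0 [n1 [n [Hn1 Hrel]]]].
  set (z := addN (smulN (n1 - 1) x) (nat_comb (map snd l) n)).
  assert (Mz : M z).
  { apply Hs; [apply smulN_M with d; auto | apply nat_comb_M with d; auto].
    rewrite Forall_map. eapply Forall_impl; [|exact Hl]. simpl; tauto. }
  exists n0, z. split; auto.
  apply functional_extensionality. intros i. unfold smulN at 1, addN at 1.
  destruct (lt_dec i d) as [Hi|Hi].
  - apply INR_eq. unfold z, addN, smulN.
    rewrite mult_INR, !plus_INR, mult_INR, minus_INR, nat_comb_INR, length_map, Hrel by auto.
    change (INR 1) with 1. ring.
  - destruct Hs as [_ [_ Hsupp]].
    rewrite (Hsupp y My i), (Hsupp x Mx i), (Hsupp z Mz i) by lia. lia.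
Qed.

Definition face_of (M : natvec -> Prop) (y : natvec) (v : rvec) : Prop :=
  coneM M v /\ exists lam, coneM M (addR (smulR lam (embed y)) (smulR (-1) v)).

Lemma face_of_is_face M y : is_face (coneM M) (face_of M y).
Proof.
  split; [split; [|split] | split].
  - exists zeroR. split; [apply coneM_zero|]. exists 0.
    apply (coneM_ext M zeroR); [intro; unfold addR, smulR, zeroR; ring | apply coneM_zero].
  - intros a b [Ca [la Ha]] [Cb [lb Hb]]. split; [apply coneM_add; auto|].
    exists (la + lb). eapply coneM_ext; [|exact (coneM_add _ _ _ Ha Hb)]. intro; unfold addR, smulR; ring.
  - intros a v Ha [Cv [lv Hv]]. split; [apply coneM_scale; auto|].
    exists (a * lv). eapply coneM_ext; [|exact (coneM_scale _ a _ Ha Hv)]. intro; unfold addR, smulR; ring.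
  - intros v [Cv _]; auto.
  - (* if (1-t) a + t b <= lam y, then a <= lam/(1-t) y and b <= lam/t y *)
    intros a b Ca Cb [t [Ht [_ [lp Hp]]]]. split; split; auto.
    + exists (lp / (1 - t)).
      refine (coneM_ext M _ _ _ (coneM_scale _ (/ (1 - t)) _ _ (coneM_add _ _ _ Hp (coneM_scale _ t _ _ Cb)))).
      * intro; unfold addR, smulR; field; lra.
      * left; apply Rinv_0_lt_compat; lra.
      * lra.
    + exists (lp / t).
      refine (coneM_ext M _ _ _ (coneM_scale _ (/ t) _ _ (coneM_add _ _ _ Hp (coneM_scale _ (1 - t) _ _ Ca)))).
      * intro; unfold addR, smulR; field; lra.
      * left; apply Rinv_0_lt_compat; lra.
      * lra.
Qed.

Lemma trivial_faces_to_primary d M : submonoid_Nd d M -> nontrivial M ->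
  (forall N, face_submonoid M N ->
     (forall x, N x <-> x = zeroN) \/ (forall x, N x <-> M x)) -> primary M.
Proof.
  intros Hs Hnt Htriv. split; auto. intros x y Mx Hx0 My Hy0.
  destruct (Htriv (fun z => M z /\ face_of M y (embed z))) as [Hzero | Hall].
  - exists (face_of M y). split; [apply face_of_is_face | tauto].
  - exfalso. apply Hy0, Hzero. split; auto. split; [apply coneM_embed; auto|].
    exists 1. apply (coneM_ext M zeroR); [intro; unfold addR, smulR, zeroR; ring | apply coneM_zero].
  - destruct (proj2 (proj2 (Hall x) Mx)) as [_ [lam Hlam]].
    destruct (coneM_pos_repr M _ Hlam) as [l [Hl Hrepr]].
    apply (cone_relation_integral d M x y lam l); auto.
    intros i. rewrite <- Hrepr. unfold addR, smulR, embed. ring.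
Qed.

(* Let x be a nonzero point of the cone, so x = c y + rest with
   c > 0, y in M \ {0} and rest in the cone.  Fix a finite family B of elements
   of M on which every w in V has coordinates a with sum |a_b| <= K |w|_1.
   Primarity gives N with N y - b in the cone for all b in B, so that
   w + N (sum |a_b|) y lies in the cone; for w small, N (sum |a_b|) <= c and
   x + w = (c - N sum |a_b|) y + rest + (w + N (sum |a_b|) y) is in the cone. *)

Definition supported (d : nat) (v : rvec) : Prop := forall i, (d <= i)%nat -> v i = 0.
Definition norm1 (d : nat) (v : rvec) : R := rsum d (fun i => Rabs (v i)).

Fixpoint comb (B : list rvec) (a : nat -> R) : rvec :=
  match B with
  | [] => zeroR
  | b :: B' => addR (smulR (a O) b) (comb B' (fun k => a (S k)))
  end.

Definition spanR (S : rvec -> Prop) (v : rvec) : Prop :=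
  exists B a, Forall S B /\ v = comb B a.

Definition coef_norm (n : nat) (a : nat -> R) : R := rsum n (fun k => Rabs (a k)).

Definition bounded_coords (d : nat) (S : rvec -> Prop) (B : list rvec) (K : R) : Prop :=
  Forall S B /\ 0 <= K /\
  forall v, spanR S v -> exists a, v = comb B a /\ coef_norm (length B) a <= K * norm1 d v.

Lemma norm1_nonneg n v : 0 <= norm1 n v.
Proof. apply rsum_nonneg. intros; apply Rabs_pos. Qed.

Lemma norm1_coord n v i : (i < n)%nat -> Rabs (v i) <= norm1 n v.
Proof. intros Hi. apply (rsum_term n (fun i => Rabs (v i))); auto. intros; apply Rabs_pos. Qed.

Lemma norm1_add_scaled n v a w : norm1 n (addR v (smulR a w)) <= norm1 n v + Rabs a * norm1 n w.
Proof.
  unfold norm1. rewrite <- rsum_scale, <- rsum_add. apply rsum_le. intros j _.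
  unfold addR, smulR. rewrite <- Rabs_mult. apply Rabs_triang.
Qed.

Lemma coef_norm_nonneg n a : 0 <= coef_norm n a.
Proof. apply rsum_nonneg. intros; apply Rabs_pos. Qed.

Lemma coef_norm_cons n a : coef_norm (S n) a = Rabs (a O) + coef_norm n (fun k => a (S k)).
Proof. apply rsum_shift. Qed.

Definition linear_map (f : rvec -> rvec) : Prop :=
  (forall v w, f (addR v w) = addR (f v) (f w)) /\ (forall a v, f (smulR a v) = smulR a (f v)).

Lemma comb_linear f B a : linear_map f -> f (comb B a) = comb (map f B) a.
Proof.
  intros [Hadd Hscale]. revert a; induction B as [|b B IH]; intros a; simpl.
  - replace zeroR with (smulR 0 zeroR) at 1 by (apply functional_extensionality; intro; unfold smulR, zeroR; ring).
    rewrite Hscale. apply functional_extensionality; intro; unfold smulR, zeroR; ring.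
  - rewrite Hadd, Hscale, IH. reflexivity.
Qed.

Lemma comb_supported d B a : Forall (supported d) B -> supported d (comb B a).
Proof.
  intros HB. revert a; induction HB as [|b B Hb _ IH]; intros a i Hi; [reflexivity|].
  simpl. unfold addR, smulR. rewrite Hb, IH by auto. ring.
Qed.

Definition col_abs (T : list rvec) (j : nat) : R := fold_right (fun t acc => Rabs (t j) + acc) 0 T.

Lemma col_abs_nonneg T j : 0 <= col_abs T j.
Proof. induction T as [|t T IH]; simpl; [lra | pose proof (Rabs_pos (t j)); lra]. Qed.

Lemma comb_coord_bound T b j : Rabs (comb T b j) <= coef_norm (length T) b * col_abs T j.
Proof.
  revert b; induction T as [|t T IH]; intros b; simpl.
  - unfold zeroR, coef_norm. simpl. rewrite Rabs_R0. lra.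
  - rewrite coef_norm_cons. unfold addR, smulR.
    eapply Rle_trans; [apply Rabs_triang|]. rewrite Rabs_mult.
    pose proof (IH (fun k => b (S k))). pose proof (Rabs_pos (b O)). pose proof (Rabs_pos (t j)).
    pose proof (coef_norm_nonneg (length T) (fun k => b (S k))). pose proof (col_abs_nonneg T j). nra.
Qed.

Lemma list_choice (S : rvec -> Prop) (f : rvec -> rvec) B :
  Forall (fun b => exists s, S s /\ b = f s) B -> exists T, Forall S T /\ B = map f T.
Proof.
  induction 1 as [|b B [s [Hs ->]] _ [T [HT ->]]]; [exists []; auto|].
  exists (s :: T). split; auto.
Qed.

(* Elimination of the coordinate d of R^(d+1) using a vector s0 of S with
   s0 d <> 0: the projection v - (v d / s0 d) s0 lands in R^d, and bounded
   coordinates for the projected family give bounded coordinates for S. *)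
Section PivotStep.

Variables (d : nat) (A : rvec -> Prop) (s0 : rvec).
Hypothesis Hs0 : A s0.
Hypothesis Hpivot : s0 d <> 0.

Definition pivot_proj (v : rvec) : rvec := addR v (smulR (- (v d / s0 d)) s0).

Lemma pivot_proj_linear : linear_map pivot_proj.
Proof.
  split; intros; apply functional_extensionality; intro; unfold pivot_proj, addR, smulR; field; auto.
Qed.

Lemma pivot_proj_supported v :
  supported (S d) v -> supported (S d) s0 -> supported d (pivot_proj v).
Proof.
  intros Hv H0 i Hi. unfold pivot_proj, addR, smulR.
  destruct (Nat.eq_dec i d) as [->|Hne]; [field; auto|].
  rewrite (Hv i), (H0 i) by lia. ring.
Qed.

Lemma pivot_decomp v w :
  pivot_proj v = pivot_proj w -> v = addR (smulR ((v d - w d) / s0 d) s0) w.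
Proof.
  intros H. apply functional_extensionality; intro i.
  assert (Hi : pivot_proj v i = pivot_proj w i) by (rewrite H; reflexivity).
  unfold pivot_proj, addR, smulR in *. apply (Rplus_eq_reg_r (- (v d / s0 d) * s0 i)).
  rewrite Hi. field. auto.
Qed.

Lemma pivot_proj_norm1 v :
  norm1 d (pivot_proj v) <= norm1 (S d) v * (1 + / Rabs (s0 d) * norm1 (S d) s0).
Proof.
  assert (Hic : 0 < / Rabs (s0 d)) by (apply Rinv_0_lt_compat, Rabs_pos_lt; auto).
  pose proof (norm1_nonneg (S d) s0). pose proof (norm1_nonneg (S d) v).
  assert (Hvd : Rabs (v d) <= norm1 (S d) v) by (apply norm1_coord; lia).
  apply Rle_trans with (norm1 (S d) (pivot_proj v)).
  - unfold norm1. simpl. pose proof (Rabs_pos (pivot_proj v d)). lra.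
  - eapply Rle_trans; [apply norm1_add_scaled|].
    rewrite Rabs_Ropp. unfold Rdiv. rewrite Rabs_mult, Rabs_inv.
    assert (Rabs (v d) * / Rabs (s0 d) * norm1 (S d) s0
            <= norm1 (S d) v * / Rabs (s0 d) * norm1 (S d) s0)
      by (apply Rmult_le_compat_r; [|apply Rmult_le_compat_r]; lra).
    nra.
Qed.

Lemma pivot_step T K' : Forall A T ->
  bounded_coords d (fun w => exists s, A s /\ w = pivot_proj s) (map pivot_proj T) K' ->
  exists K, bounded_coords (S d) A (s0 :: T) K.
Proof.
  intros HT [_ [HK' Hrep]].
  set (ic := / Rabs (s0 d)).
  assert (Hic : 0 < ic) by (apply Rinv_0_lt_compat, Rabs_pos_lt; auto).
  set (N0 := norm1 (S d) s0). set (Rc := col_abs T d). set (Q := K' * (1 + ic * N0)).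
  assert (HN0 : 0 <= N0) by apply norm1_nonneg. assert (HRc : 0 <= Rc) by apply col_abs_nonneg.
  assert (HQ : 0 <= Q) by (apply Rmult_le_pos; [auto | nra]).
  exists (ic + Q * (Rc * ic + 1)). split; [constructor; auto | split].
  { assert (0 <= Rc * ic) by (apply Rmult_le_pos; lra).
    assert (0 <= Q * (Rc * ic + 1)) by (apply Rmult_le_pos; lra). lra. }
  intros v [B [a [HB Hv]]].
  destruct (Hrep (pivot_proj v)) as [b [Hb Hbb]].
  { exists (map pivot_proj B), a. split.
    - rewrite Forall_map. eapply Forall_impl; [|exact HB]. eauto.
    - rewrite Hv. apply comb_linear, pivot_proj_linear. }
  rewrite length_map in Hbb. rewrite <- comb_linear in Hb by apply pivot_proj_linear.
  exists (fun k => match k with O => (v d - comb T b d) / s0 d | S k => b k end).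
  split; [apply pivot_decomp; auto|].
  simpl length. rewrite coef_norm_cons.
  change (coef_norm (length T) (fun k => b k)) with (coef_norm (length T) b).
  set (nv := norm1 (S d) v).
  assert (Hnv : 0 <= nv) by apply norm1_nonneg.
  assert (Hvd : Rabs (v d) <= nv) by (apply norm1_coord; lia).
  assert (Hdiv : forall r, Rabs (r / s0 d) = Rabs r * ic)
    by (intros r; unfold Rdiv, ic; rewrite Rabs_mult, Rabs_inv; auto).
  assert (Hproj : norm1 d (pivot_proj v) <= nv * (1 + ic * N0)) by apply pivot_proj_norm1.
  assert (Hcoef : coef_norm (length T) b <= Q * nv).
  { eapply Rle_trans; [exact Hbb|]. unfold Q. rewrite Rmult_assoc.
    apply Rmult_le_compat_l; auto. lra. }
  assert (Hcomb : Rabs (comb T b d) <= Q * nv * Rc).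
  { eapply Rle_trans; [apply comb_coord_bound | apply Rmult_le_compat_r; auto]. }
  rewrite Hdiv.
  assert (Rabs (v d - comb T b d) <= nv + Q * nv * Rc)
    by (unfold Rminus; eapply Rle_trans; [apply Rabs_triang | rewrite Rabs_Ropp; lra]).
  assert (Rabs (v d - comb T b d) * ic <= (nv + Q * nv * Rc) * ic) by (apply Rmult_le_compat_r; lra).
  nra.
Qed.

End PivotStep.

(* Every set of vectors of R^d has a finite subfamily with bounded coordinates
   on its span (finite-dimensional norm equivalence, by Gaussian elimination). *)
Lemma bounded_coords_exists d : forall A : rvec -> Prop,
  (forall v, A v -> supported d v) -> exists B K, bounded_coords d A B K.
Proof.
  induction d as [|d IH]; intros A HS.
  - exists [], 0. split; [constructor | split; [lra|]]. intros v [B [a [HB ->]]].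
    exists (fun _ => 0). split.
    + apply functional_extensionality; intro i. apply (comb_supported 0); [|lia].
      eapply Forall_impl; [|exact HB]. auto.
    + unfold coef_norm. simpl. lra.
  - destruct (classic (exists s0, A s0 /\ s0 d <> 0)) as [[s0 [Hs0 Hpiv]] | Hnopiv].
    + destruct (IH (fun w => exists s, A s /\ w = pivot_proj d s0 s)) as [B' [K' HB']].
      { intros w [s [Hs ->]]. apply pivot_proj_supported; auto. }
      destruct (list_choice A (pivot_proj d s0) B' (proj1 HB')) as [T [HT ->]].
      destruct (pivot_step d A s0 Hs0 Hpiv T K' HT HB') as [K HK]. eauto.
    +
      destruct (IH A) as [B [K [HB [HK Hrep]]]].
      { intros v Hv i Hi. destruct (Nat.eq_dec i d) as [->|Hne]; [|apply HS; auto; lia].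
        apply NNPP. intro. apply Hnopiv. eauto. }
      exists B, K. split; auto. split; auto. intros v Hv.
      destruct (Hrep v Hv) as [a [Ha Hb]]. exists a. split; auto.
      unfold norm1 in *. simpl. pose proof (Rabs_pos (v d)). nra.
Qed.

Definition embedded (M : natvec -> Prop) (v : rvec) : Prop := exists m, M m /\ v = embed m.

Lemma lincomb_as_comb l :
  lincomb l = comb (map (fun p => embed (snd p)) l) (fun k => fst (nth k l (0, zeroN))).
Proof.
  induction l as [|p l IH]; [reflexivity|].
  apply functional_extensionality; intro i. rewrite lincomb_cons, IH. reflexivity.
Qed.

Lemma spanM_spanR M w : spanM M w -> spanR (embedded M) w.
Proof.
  intros [l [Hl ->]]. rewrite lincomb_as_comb. eexists _, _. split; [|reflexivity].
  rewrite Forall_map. eapply Forall_impl; [|exact Hl]. intros p Hp. exists (snd p). auto.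
Qed.

Lemma coneM_supported d M v : submonoid_Nd d M -> coneM M v -> supported d v.
Proof.
  intros [_ [_ Hsupp]] [l [Hl ->]] i Hi.
  induction Hl as [|p l [_ Mp] _ IH]; [reflexivity|].
  rewrite lincomb_cons, IH, (Hsupp _ Mp i Hi). simpl. ring.
Qed.

Lemma cone_nonzero_generator M x : coneM M x -> x <> zeroR ->
  exists c y rest, 0 < c /\ M y /\ y <> zeroN /\ coneM M rest /\ x = addR (smulR c (embed y)) rest.
Proof.
  intros Cx Hx0. destruct (coneM_pos_repr M x Cx) as [[|p l] [Hl ->]]; [now contradiction Hx0|].
  inversion Hl as [|? ? [Hc [My Hy0]] Hl']; subst.
  exists (fst p), (snd p), (lincomb l). repeat split; auto.
  exists l. split; auto. eapply Forall_impl; [|exact Hl']. simpl. intros q [? [? _]]; split; auto; lra.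
Qed.

Lemma primary_dominates M y B : primary M -> M y -> y <> zeroN -> Forall (embedded M) B ->
  exists N, 0 <= N /\ Forall (fun b => coneM M (addR (smulR N (embed y)) (smulR (-1) b))) B.
Proof.
  intros [_ Hprim] My Hy0. induction 1 as [|b B [m [Mm ->]] _ [N1 [HN1 HF]]]; [exists 0; split; [lra | constructor]|].
  assert (Hm : exists n, 0 <= n /\ coneM M (addR (smulR n (embed y)) (smulR (-1) (embed m)))).
  { destruct (classic (m = zeroN)) as [->|Hm0].
    - exists 0. split; [lra|].
      apply (coneM_ext M zeroR); [intro; unfold addR, smulR, embed, zeroR, zeroN; simpl; ring | apply coneM_zero].
    - destruct (Hprim m y Mm Hm0 My Hy0) as [n [z [Mz Hz]]].
      exists (INR n). split; [apply pos_INR|].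
      apply (coneM_ext M (embed z)); [|apply coneM_embed; auto].
      intros i. assert (Hzi : INR (smulN n y i) = INR (addN m z i)) by (rewrite Hz; auto).
      unfold smulN, addN in Hzi. rewrite mult_INR, plus_INR in Hzi.
      unfold addR, smulR, embed. lra. }
  destruct Hm as [n [Hn Cn]].
  assert (Cy : forall a, 0 <= a -> coneM M (smulR a (embed y))) by (intros; apply coneM_scale, coneM_embed; auto).
  exists (N1 + n). split; [lra | constructor].
  - eapply coneM_ext; [|exact (coneM_add _ _ _ Cn (Cy N1 HN1))]. intro; unfold addR, smulR; ring.
  - eapply Forall_impl; [|exact HF]. intros b Hb.
    eapply coneM_ext; [|exact (coneM_add _ _ _ Hb (Cy n Hn))]. intro; unfold addR, smulR; ring.
Qed.

Lemma comb_dominated M y B N : M y -> 0 <= N -> Forall (embedded M) B ->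
  Forall (fun b => coneM M (addR (smulR N (embed y)) (smulR (-1) b))) B ->
  forall a, coneM M (addR (comb B a) (smulR (N * coef_norm (length B) a) (embed y))).
Proof.
  intros My HN HB. induction HB as [|b B [m [Mm ->]] _ IH]; intros HF a.
  - apply (coneM_ext M zeroR); [intro; unfold coef_norm; simpl; unfold addR, smulR, zeroR; ring | apply coneM_zero].
  - inversion HF as [|? ? Hdom HF']; subst.
    assert (Hterm : coneM M (addR (smulR (a O) (embed m)) (smulR (N * Rabs (a O)) (embed y)))).
    { destruct (Rle_dec 0 (a O)).
      - rewrite Rabs_right by lra.
        apply coneM_add; apply coneM_scale; try apply coneM_embed; auto. apply Rmult_le_pos; auto.
      - rewrite Rabs_left by lra. eapply coneM_ext; [|exact (coneM_scale M (- a O) _ ltac:(lra) Hdom)].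
        intro; unfold addR, smulR; ring. }
    eapply coneM_ext; [|exact (coneM_add _ _ _ Hterm (IH HF' (fun k => a (S k))))].
    intro i. simpl length. rewrite coef_norm_cons. simpl. unfold addR, smulR. ring.
Qed.

Lemma norm1_le_dist d x v : norm1 d (addR v (smulR (-1) x)) <= INR d * dist d x v.
Proof.
  unfold norm1. rewrite <- rsum_const. apply rsum_le. intros j Hj.
  eapply Rle_trans; [|apply (dist_coord d x v j Hj)].
  right. unfold addR, smulR. rewrite <- Rabs_Ropp. f_equal. ring.
Qed.

Lemma nonzero_coord d x : supported d x -> x <> zeroR -> exists i, (i < d)%nat /\ x i <> 0.
Proof.
  intros Hx Hx0. apply NNPP. intros Hn. apply Hx0. apply functional_extensionality. intros i.
  destruct (lt_dec i d); [apply NNPP; intro; apply Hn; eauto | apply Hx; lia].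
Qed.

Lemma cone_absorbs_small d M B K y N c w :
  bounded_coords d (embedded M) B K -> M y -> 0 <= N ->
  Forall (fun b => coneM M (addR (smulR N (embed y)) (smulR (-1) b))) B ->
  spanM M w -> N * K * norm1 d w <= c -> coneM M (addR (smulR c (embed y)) w).
Proof.
  intros [HB [HK Hrep]] My HN Hdom Hw Hsmall.
  destruct (Hrep w (spanM_spanR M w Hw)) as [a [Ha Hcoef]].
  set (s := N * coef_norm (length B) a).
  assert (Hsc : s <= c).
  { apply Rle_trans with (N * K * norm1 d w); auto.
    unfold s. rewrite Rmult_assoc. apply Rmult_le_compat_l; auto. }
  assert (Cy : coneM M (smulR (c - s) (embed y))) by (apply coneM_scale, coneM_embed; auto; lra).
  eapply coneM_ext; [|exact (coneM_add _ _ _ Cy (comb_dominated M y B N My HN HB Hdom a))].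
  intros i. rewrite Ha. unfold addR, smulR. fold s. ring.
Qed.

Lemma primary_to_open d M : submonoid_Nd d M -> primary M ->
  open_in_V d M (fun v => coneM M v /\ v <> zeroR).
Proof.
  intros Hs Hp. split; [intros v [Cv _]; apply coneM_spanM; auto|].
  intros x [Cx Hx0].
  destruct (bounded_coords_exists d (embedded M)) as [B [K HBK]].
  { intros v [m [Mm ->]]. apply coneM_supported with M; auto. apply coneM_embed; auto. }
  pose proof (proj1 (proj2 HBK)) as HK.
  destruct (cone_nonzero_generator M x Cx Hx0) as [c [y [rest [Hc [My [Hy0 [Crest Hx]]]]]]].
  destruct (primary_dominates M y B Hp My Hy0 (proj1 HBK)) as [N [HN Hdom]].
  (* a coordinate keeping the neighbours of x away from 0 *)
  destruct (nonzero_coord d x (coneM_supported d M x Hs Cx) Hx0) as [i0 [Hi0 Hxi0]].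
  set (P := N * K * INR d).
  assert (HP : 0 <= P) by (apply Rmult_le_pos; [apply Rmult_le_pos; auto | apply pos_INR]).
  exists (Rmin (Rabs (x i0)) (c / (P + 1))).
  split; [apply Rmin_glb_lt; [apply Rabs_pos_lt | apply Rdiv_lt_0_compat]; auto; lra|].
  intros v Hv Hdist.
  assert (Hnear : dist d x v < Rabs (x i0)) by (eapply Rlt_le_trans; [exact Hdist | apply Rmin_l]).
  assert (Hclose : dist d x v < c / (P + 1)) by (eapply Rlt_le_trans; [exact Hdist | apply Rmin_r]).
  split.
  2:{ intros E. pose proof (dist_coord d x v i0 Hi0) as Hcoord.
      replace (v i0) with 0 in Hcoord by (rewrite E; reflexivity).
      rewrite Rminus_0_r in Hcoord. lra. }
  (* v = rest + (c y + w) with w = v - x small *)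
  set (w := addR v (smulR (-1) x)).
  assert (Hsmall : N * K * norm1 d w <= c).
  { pose proof (norm1_le_dist d x v) as Hw. fold w in Hw.
    assert (HNK : 0 <= N * K) by (apply Rmult_le_pos; auto).
    assert (P * dist d x v <= P * (c / (P + 1))) by (apply Rmult_le_compat_l; lra).
    assert (P * (c / (P + 1)) <= c)
      by (apply (Rmult_le_reg_r (P + 1)); [lra|]; unfold Rdiv; field_simplify; lra).
    apply Rmult_le_compat_l with (r := N * K) in Hw; auto. unfold P in *. nra. }
  assert (Cw : coneM M (addR (smulR c (embed y)) w)).
  { apply (cone_absorbs_small d M B K y N c w); auto.
    apply spanM_add; auto. apply spanM_scale, coneM_spanM; auto. }
  eapply coneM_ext; [|exact (coneM_add _ _ _ Crest Cw)].
  intros i. unfold w. rewrite Hx. unfold addR, smulR. ring.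
Qed.

Theorem mainTheorem13 (d : nat) (M : natvec -> Prop) :
  submonoid_Nd d M -> nontrivial M ->
  (primary M <->
     (forall N, face_submonoid M N ->
        (forall x, N x <-> x = zeroN) \/ (forall x, N x <-> M x))) /\
  ((forall N, face_submonoid M N ->
        (forall x, N x <-> x = zeroN) \/ (forall x, N x <-> M x)) <->
     open_in_V d M (fun v => coneM M v /\ v <> zeroR)).
Proof.
  intros Hs Hnt.
  pose proof (primary_to_open d M Hs) as a_to_c.
  pose proof (open_to_trivial_faces d M Hs) as c_to_b.
  pose proof (trivial_faces_to_primary d M Hs Hnt) as b_to_a.
  split; split; auto.
Qed.
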